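(* In the continuous-time single-buyer game with known total value $V=1$, every truthful direct-revelation mechanism satisfies $\inf_v X_v\le 1/e$, where the infimum is over all buyer types $v$ and $X_v=\int_0^1x_v(t)\,dt$ is the revenue obtained from type $v$.
   Context: Continuous-time single-buyer game: a buyer type is a Lipschitz-continuous $v:[0,1]\to[0,\infty)$ with $\int_0^1 v(t)\,dt=V$ ($V$ known to the seller). A direct-revelation mechanism assigns to each type $v$ a continuous rate function $r_v:[0,1]\to[0,1]$ and a continuous payment function $x_v:[0,1]\to[0,\infty)$. It is truthful if (i) $r_v(t)v(t)-x_v(t)\ge0$ for all types $v$ and all $t\in[0,1]$, and (ii) for all types $v,v'$ and $\tau\in[0,1]$ such that $r_{v'}(t)v(t)-x_{v'}(t)\ge0$ for all $0\le t\le\tau$, we have $\int_0^1(r_v(t)v(t)-x_v(t))\,dt\ge\int_0^\tau(r_{v'}(t)v(t)-x_{v'}(t))\,dt$. *)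

From Stdlib Require Import Reals.
From Coquelicot Require Import Coquelicot.
Open Scope R_scope.

Definition continuous_on_Icc (a b : R) (f : R -> R) : Prop :=
  forall t, a <= t <= b ->
    forall eps, 0 < eps -> exists delta, 0 < delta /\
      forall s, a <= s <= b -> Rabs (s - t) < delta -> Rabs (f s - f t) < eps.

Definition lipschitz_on_Icc (a b : R) (f : R -> R) : Prop :=
  exists L, 0 <= L /\ forall s t, a <= s <= b -> a <= t <= b ->
    Rabs (f s - f t) <= L * Rabs (s - t).

(* A buyer type with known total value V: a Lipschitz v : [0,1] -> [0,oo)
   with integral V over [0,1].  (Values outside [0,1] are irrelevant.) *)
Definition buyer_type (V : R) (v : R -> R) : Prop :=
  lipschitz_on_Icc 0 1 v /\
  (forall t, 0 <= t <= 1 -> 0 <= v t) /\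
  RInt v 0 1 = V.

(* A direct-revelation mechanism: rate r v and payment x v for each type v. *)
Definition mechanism := (R -> R) -> (R -> R).

Definition well_formed (V : R) (r x : mechanism) : Prop :=
  forall v, buyer_type V v ->
    continuous_on_Icc 0 1 (r v) /\ continuous_on_Icc 0 1 (x v) /\
    (forall t, 0 <= t <= 1 -> 0 <= r v t <= 1) /\
    (forall t, 0 <= t <= 1 -> 0 <= x v t).

Definition util (r x : mechanism) (v v' : R -> R) (t : R) : R :=
  r v' t * v t - x v' t.

Definition truthful (V : R) (r x : mechanism) : Prop :=
  (forall v, buyer_type V v -> forall t, 0 <= t <= 1 -> 0 <= util r x v v t) /\
  (* (ii) no profitable misreport followed by leaving at time tau *)
  (forall v v' tau, buyer_type V v -> buyer_type V v' -> 0 <= tau <= 1 ->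
     (forall t, 0 <= t <= tau -> 0 <= util r x v v' t) ->
     RInt (util r x v v') 0 tau <= RInt (util r x v v) 0 1).

Definition revenue (x : mechanism) (v : R -> R) : R := RInt (x v) 0 1.

Definition inf_revenue (V : R) (x : mechanism) : Rbar :=
  Glb_Rbar (fun y => exists v, buyer_type V v /\ y = revenue x v).

(* Let [astar] be the supremum of the utilities of all types and [w] a type whose utility is
   almost [astar].  Cut the value of [w] into [n] thin slices; for a slice, let [m] be its value,
   [q] the part of it that [w] consumes, and [M] the value accumulated by the end of the next
   slice.  The type that follows [w] with this slice inflated by the factor keeping its total
   value 1, and nothing afterwards, may report [w] and leave after the slice; its gain is bounded
   by [astar], which forces [(1 - M) q <= astar m].  So [w] consumes at rate at most
   [min(1, astar/(1-M))] as its accumulated value [M] runs from 0 to 1, i.e. at most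
   [astar - astar ln astar] in total, and its payments (consumption minus utility) are at most
   [- astar ln astar <= 1/e], up to errors vanishing with [1/n]. *)

From Stdlib Require Import Reals Lra Lia Classical.
From Coquelicot Require Import Coquelicot.
Open Scope R_scope.

(** * Integrals and continuity on a closed interval *)

(* Coquelicot states these in an abstract normed module; phrased with [Rplus], [Rminus] and
   [Rmult] they rewrite in real-valued goals. *)
Lemma RInt_Rplus (f g : R -> R) a b : ex_RInt f a b -> ex_RInt g a b ->
  RInt (fun s => f s + g s) a b = RInt f a b + RInt g a b.
Proof. exact (RInt_plus f g a b). Qed.

Lemma RInt_Rminus (f g : R -> R) a b : ex_RInt f a b -> ex_RInt g a b ->
  RInt (fun s => f s - g s) a b = RInt f a b - RInt g a b.
Proof. exact (RInt_minus f g a b). Qed.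

Lemma RInt_Rmult_l (f : R -> R) a b c : ex_RInt f a b ->
  RInt (fun s => c * f s) a b = c * RInt f a b.
Proof. exact (RInt_scal f a b c). Qed.

Lemma RInt_Rconst a b c : RInt (fun _ => c) a b = (b - a) * c.
Proof. exact (RInt_const a b c). Qed.

Lemma RInt_Chasles_R (f : R -> R) a b c : ex_RInt f a b -> ex_RInt f b c ->
  RInt f a b + RInt f b c = RInt f a c.
Proof. exact (RInt_Chasles f a b c). Qed.

Lemma RInt_ext_le (f g : R -> R) a b : a <= b -> (forall s, a < s < b -> f s = g s) ->
  RInt f a b = RInt g a b.
Proof.
  intros Hab Hfg. apply (RInt_ext f g a b).
  intros s Hs. rewrite Rmin_left, Rmax_right in Hs by exact Hab. auto.
Qed.

Lemma RInt_eq_0 (f : R -> R) a b : a <= b -> (forall s, a < s < b -> f s = 0) ->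
  RInt f a b = 0.
Proof.
  intros Hab Hf. rewrite (RInt_ext_le f (fun _ => 0) a b Hab Hf), RInt_Rconst. apply Rmult_0_r.
Qed.

Definition clamp (a b s : R) : R := Rmax a (Rmin b s).

Lemma clamp_lip a b s t : Rabs (clamp a b s - clamp a b t) <= Rabs (s - t).
Proof.
  unfold clamp, Rmax, Rmin; repeat destruct Rle_dec; unfold Rabs; repeat destruct Rcase_abs; lra.
Qed.

Lemma clamp_mono a b s t : s <= t -> clamp a b s <= clamp a b t.
Proof. intros; unfold clamp, Rmax, Rmin; repeat destruct Rle_dec; lra. Qed.

Lemma clamp_in a b s : a <= b -> a <= clamp a b s <= b.
Proof. intros; unfold clamp, Rmax, Rmin; repeat destruct Rle_dec; lra. Qed.

Lemma clamp_id a b s : a <= s <= b -> clamp a b s = s.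
Proof. intros; unfold clamp, Rmax, Rmin; repeat destruct Rle_dec; lra. Qed.

Lemma clamp_left a b s : a <= b -> s <= a -> clamp a b s = a.
Proof. intros; unfold clamp, Rmax, Rmin; repeat destruct Rle_dec; lra. Qed.

Lemma clamp_right a b s : a <= b -> b <= s -> clamp a b s = b.
Proof. intros; unfold clamp, Rmax, Rmin; repeat destruct Rle_dec; lra. Qed.

Lemma lt_clamp a b s t : a < s -> s < clamp a b t -> s < t.
Proof. intros; unfold clamp, Rmax, Rmin in *; repeat destruct Rle_dec; lra. Qed.

Lemma clamp_lt a b s t : s < b -> clamp a b t < s -> t < s.
Proof. intros; unfold clamp, Rmax, Rmin in *; repeat destruct Rle_dec; lra. Qed.

Lemma RInt_le_support (g : R -> R) a b al be B :
  a <= b -> al <= be -> 0 <= B -> ex_RInt g a b ->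
  (forall s, a < s < b -> g s <= B) ->
  (forall s, a < s < b -> s < al \/ be < s -> g s = 0) ->
  RInt g a b <= B * (be - al).
Proof.
  intros Hab Halbe HB Hg Hle Hzero.
  set (al' := clamp a b al). set (be' := clamp a b be).
  assert (Hal' : a <= al' <= b) by apply (clamp_in _ _ _ Hab).
  assert (Hbe' : a <= be' <= b) by apply (clamp_in _ _ _ Hab).
  assert (Hmono : al' <= be') by (apply clamp_mono; exact Halbe).
  assert (Hlen : be' - al' <= be - al).
  { pose proof (clamp_lip a b be al). fold be' al' in H.
    rewrite !Rabs_pos_eq in H by lra. exact H. }
  assert (Hg1 : ex_RInt g a al') by (apply (ex_RInt_Chasles_1 g a al' b); lra || exact Hg).
  assert (Hg2 : ex_RInt g al' b) by (apply (ex_RInt_Chasles_2 g a al' b); lra || exact Hg).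
  assert (Hg3 : ex_RInt g al' be') by (apply (ex_RInt_Chasles_1 g al' be' b); lra || exact Hg2).
  assert (Hg4 : ex_RInt g be' b) by (apply (ex_RInt_Chasles_2 g al' be' b); lra || exact Hg2).
  rewrite <- (RInt_Chasles_R g a al' b Hg1 Hg2), <- (RInt_Chasles_R g al' be' b Hg3 Hg4).
  rewrite (RInt_eq_0 g a al'), (RInt_eq_0 g be' b); try lra.
  - assert (RInt g al' be' <= RInt (fun _ => B) al' be').
    { apply RInt_le; [lra | exact Hg3 | apply ex_RInt_const | ].
      intros s Hs. apply Hle. lra. }
    rewrite RInt_Rconst in H. nra.
  - intros s Hs. apply Hzero; [lra|]. right. apply (clamp_lt a b); [lra | exact (proj1 Hs)].
  - intros s Hs. apply Hzero; [lra|]. left. apply (lt_clamp a b); [lra | exact (proj2 Hs)].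
Qed.

Definition clamp_continuous (a b : R) (f : R -> R) : Prop :=
  forall y, continuous (fun s => f (clamp a b s)) y.

Lemma clamp_continuous_of_Icc a b f :
  a <= b -> continuous_on_Icc a b f -> clamp_continuous a b f.
Proof.
  intros Hab Hf y. apply continuity_pt_filterlim. intros eps Heps.
  destruct (Hf (clamp a b y) (clamp_in a b y Hab) eps Heps) as [d [Hd Hfd]].
  exists d. split; [exact Hd|]. intros s [_ Hs].
  apply Hfd; [apply clamp_in; exact Hab|].
  eapply Rle_lt_trans; [apply clamp_lip | exact Hs].
Qed.

Lemma ex_RInt_clamp_continuous a b f c d :
  clamp_continuous a b f -> a <= c -> c <= d -> d <= b -> ex_RInt f c d.
Proof.
  intros Hf Hac Hcd Hdb. apply (ex_RInt_ext (fun s => f (clamp a b s))).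
  - intros s Hs. rewrite Rmin_left, Rmax_right in Hs by lra. rewrite clamp_id; lra.
  - apply (@ex_RInt_continuous R_CompleteNormedModule). intros; apply Hf.
Qed.

Lemma clamp_continuous_const a b c : clamp_continuous a b (fun _ => c).
Proof. intros y. apply continuous_const. Qed.

Lemma clamp_continuous_minus a b f g : clamp_continuous a b f -> clamp_continuous a b g ->
  clamp_continuous a b (fun s => f s - g s).
Proof.
  intros Hf Hg y.
  exact (continuous_minus (fun s => f (clamp a b s)) (fun s => g (clamp a b s)) y (Hf y) (Hg y)).
Qed.

Lemma clamp_continuous_mult a b f g : clamp_continuous a b f -> clamp_continuous a b g ->
  clamp_continuous a b (fun s => f s * g s).
Proof.
  intros Hf Hg y.
  exact (continuous_mult (fun s => f (clamp a b s)) (fun s => g (clamp a b s)) y (Hf y) (Hg y)).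
Qed.

Create HintDb clamp_continuous.
#[local] Hint Resolve clamp_continuous_const clamp_continuous_minus clamp_continuous_mult
  : clamp_continuous.

Ltac integrable :=
  apply (ex_RInt_clamp_continuous 0 1); [eauto with clamp_continuous | lra | lra | lra].

Lemma lipschitz_on_Icc_continuous a b f : lipschitz_on_Icc a b f -> continuous_on_Icc a b f.
Proof.
  intros [L [HL Hf]] t Ht eps Heps. exists (eps / (L + 1)). split; [apply Rdiv_lt_0_compat; lra|].
  intros s Hs Hst. apply Rle_lt_trans with (L * Rabs (s - t)); [apply Hf; assumption|].
  assert (Heq : (L + 1) * (eps / (L + 1)) = eps) by (field; lra).
  pose proof (Rabs_pos (s - t)). nra.
Qed.

Lemma lipschitz_on_Icc_bounded a b f : lipschitz_on_Icc a b f ->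
  exists B, 0 <= B /\ forall s, a <= s <= b -> Rabs (f s) <= B.
Proof.
  intros [L [HL Hf]]. exists (Rabs (f a) + L * Rabs (b - a)).
  split; [pose proof (Rabs_pos (f a)); pose proof (Rabs_pos (b - a)); nra|].
  intros s Hs. pose proof (Hf s a Hs ltac:(lra)).
  pose proof (Rabs_triang_inv (f s) (f a)).
  assert (Rabs (s - a) <= Rabs (b - a)) by (rewrite !Rabs_pos_eq; lra).
  nra.
Qed.

Lemma lipschitz_on_Icc_plus a b f g : lipschitz_on_Icc a b f -> lipschitz_on_Icc a b g ->
  lipschitz_on_Icc a b (fun s => f s + g s).
Proof.
  intros [Lf [HLf Hf]] [Lg [HLg Hg]]. exists (Lf + Lg). split; [lra|].
  intros s t Hs Ht. pose proof (Hf s t Hs Ht). pose proof (Hg s t Hs Ht).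
  pose proof (Rabs_triang (f s - f t) (g s - g t)).
  replace (f s + g s - (f t + g t)) with (f s - f t + (g s - g t)) by ring. lra.
Qed.

Lemma lipschitz_on_Icc_scal a b c f : lipschitz_on_Icc a b f ->
  lipschitz_on_Icc a b (fun s => c * f s).
Proof.
  intros [L [HL Hf]]. exists (Rabs c * L). split; [pose proof (Rabs_pos c); nra|].
  intros s t Hs Ht. replace (c * f s - c * f t) with (c * (f s - f t)) by ring.
  rewrite Rabs_mult, Rmult_assoc. apply Rmult_le_compat_l; [apply Rabs_pos | auto].
Qed.

Lemma lipschitz_on_Icc_minus a b f g : lipschitz_on_Icc a b f -> lipschitz_on_Icc a b g ->
  lipschitz_on_Icc a b (fun s => f s - g s).
Proof.
  intros Hf Hg.
  destruct (lipschitz_on_Icc_plus a b f _ Hf (lipschitz_on_Icc_scal a b (-1) g Hg)) as [L [HL H]].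
  exists L. split; [exact HL|]. intros s t Hs Ht.
  replace (f s - g s - (f t - g t)) with (f s + -1 * g s - (f t + -1 * g t)) by ring. auto.
Qed.

Lemma lipschitz_on_Icc_mult a b f g : lipschitz_on_Icc a b f -> lipschitz_on_Icc a b g ->
  lipschitz_on_Icc a b (fun s => f s * g s).
Proof.
  intros Hf Hg.
  destruct (lipschitz_on_Icc_bounded a b f Hf) as [Bf [HBf Hbf]].
  destruct (lipschitz_on_Icc_bounded a b g Hg) as [Bg [HBg Hbg]].
  destruct Hf as [Lf [HLf Hf]], Hg as [Lg [HLg Hg]].
  exists (Bf * Lg + Bg * Lf). split; [nra|]. intros s t Hs Ht.
  replace (f s * g s - f t * g t) with (f s * (g s - g t) + g t * (f s - f t)) by ring.
  eapply Rle_trans; [apply Rabs_triang|]. rewrite !Rabs_mult.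
  pose proof (Hf s t Hs Ht). pose proof (Hg s t Hs Ht).
  pose proof (Hbf s Hs). pose proof (Hbg t Ht).
  assert (Rabs (f s) * Rabs (g s - g t) <= Bf * (Lg * Rabs (s - t)))
    by (apply Rmult_le_compat; auto using Rabs_pos).
  assert (Rabs (g t) * Rabs (f s - f t) <= Bg * (Lf * Rabs (s - t)))
    by (apply Rmult_le_compat; auto using Rabs_pos).
  lra.
Qed.

(** * The capped consumption rate *)

Lemma ln_le_sub1 y : 0 < y -> ln y <= y - 1.
Proof. intros Hy. pose proof (exp_ineq1_le (ln y)). rewrite exp_ln in H by exact Hy. lra. Qed.

Lemma neg_mul_ln_le_exp_m1 a : 0 < a -> - a * ln a <= exp (-1).
Proof.
  intros Ha.
  assert (Hy : 0 < / a * exp (-1))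
    by (apply Rmult_lt_0_compat; [apply Rinv_0_lt_compat; lra | apply exp_pos]).
  pose proof (ln_le_sub1 _ Hy) as H.
  rewrite ln_mult, ln_Rinv, ln_exp in H by (try apply Rinv_0_lt_compat; try apply exp_pos; lra).
  apply Rmult_le_compat_l with (r := a) in H; [|lra].
  replace (a * (/ a * exp (-1) - 1)) with (exp (-1) - a) in H by (field; lra). lra.
Qed.

Lemma ln_one_sub_diff_ge c y : 0 <= c -> c <= y -> y < 1 ->
  (y - c) / (1 - c) <= ln (1 - c) - ln (1 - y).
Proof.
  intros Hc Hcy Hy.
  pose proof (ln_le_sub1 ((1 - y) / (1 - c)) ltac:(apply Rdiv_lt_0_compat; lra)) as H.
  unfold Rdiv in H. rewrite ln_mult, ln_Rinv in H by (try apply Rinv_0_lt_compat; lra).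
  replace ((y - c) / (1 - c)) with (1 - (1 - y) * / (1 - c)) by (field; lra). lra.
Qed.

(* [cap_rate a] is min(1, a/(1-y)) and [cap_prim a] its primitive vanishing at 0;
   the total [cap_prim a 1 = a - a ln a] is where the bound [1/e] on [- a ln a] enters. *)
Definition cap_rate (a y : R) : R := if Rlt_dec y (1 - a) then a / (1 - y) else 1.

Definition cap_prim (a y : R) : R :=
  if Rle_dec y (1 - a) then - a * ln (1 - y) else - a * ln a + (y - (1 - a)).

Lemma cap_rate_ge0 a y : 0 < a -> 0 <= cap_rate a y.
Proof. intros. unfold cap_rate. destruct Rlt_dec; [apply Rlt_le, Rdiv_lt_0_compat|]; lra. Qed.

Lemma cap_rate_eq1 a y : 1 - a <= y -> cap_rate a y = 1.
Proof. intros. unfold cap_rate. destruct Rlt_dec; lra. Qed.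

Lemma cap_rate_mono a y z : 0 < a -> y <= z -> cap_rate a y <= cap_rate a z.
Proof.
  intros Ha Hyz. unfold cap_rate.
  destruct (Rlt_dec y (1 - a)), (Rlt_dec z (1 - a)); try lra.
  - apply Rmult_le_compat_l; [lra|]. apply Rinv_le_contravar; lra.
  - apply Rle_div_l; lra.
Qed.

Lemma le_mul_cap_rate a q m y : 0 < a -> 0 <= q <= m -> (1 - y) * q <= a * m ->
  q <= m * cap_rate a y.
Proof.
  intros Ha Hqm Hcon. unfold cap_rate. destruct Rlt_dec; [|lra].
  replace (m * (a / (1 - y))) with (a * m / (1 - y)) by (field; lra).
  apply Rle_div_r; lra.
Qed.

Lemma cap_prim_secant a c b : 0 < a -> a <= 1 -> 0 <= c -> c <= b ->
  cap_rate a c * (b - c) <= cap_prim a b - cap_prim a c.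
Proof.
  intros Ha Ha1 Hc Hcb. unfold cap_rate, cap_prim.
  destruct (Rlt_dec c (1 - a)) as [H1|H1], (Rle_dec b (1 - a)) as [H2|H2],
    (Rle_dec c (1 - a)) as [H3|H3]; try lra.
  - pose proof (ln_one_sub_diff_ge c b Hc Hcb ltac:(lra)).
    replace (a / (1 - c) * (b - c)) with (a * ((b - c) / (1 - c))) by (field; lra). nra.
  - pose proof (ln_one_sub_diff_ge c (1 - a) Hc ltac:(lra) ltac:(lra)).
    replace (1 - (1 - a)) with a in H by ring.
    assert (a / (1 - c) <= 1) by (apply Rle_div_l; lra).
    replace (a / (1 - c) * (b - c))
      with (a / (1 - c) * (b - (1 - a)) + a * ((1 - a - c) / (1 - c))) by (field; lra).
    nra.
  - assert (c = b) by lra. subst. lra.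
  - replace c with (1 - a) by lra. replace (1 - (1 - a)) with a by ring. lra.
Qed.

Lemma cap_prim_mono a c b : 0 < a -> a <= 1 -> 0 <= c -> c <= b ->
  cap_prim a c <= cap_prim a b.
Proof.
  intros Ha Ha1 Hc Hcb.
  pose proof (cap_prim_secant a c b Ha Ha1 Hc Hcb). pose proof (cap_rate_ge0 a c Ha). nra.
Qed.

Lemma cap_prim0 a : a <= 1 -> cap_prim a 0 = 0.
Proof. intros. unfold cap_prim. destruct Rle_dec; [|lra]. rewrite Rminus_0_r, ln_1. ring. Qed.

Lemma cap_prim_right a y : 1 - a < y -> cap_prim a y = - a * ln a + (y - (1 - a)).
Proof. intros. unfold cap_prim. destruct Rle_dec; lra. Qed.

Section CappedSums.
Variables (n : nat) (M Q : nat -> R) (a D : R).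
Hypotheses (Ha : 0 < a) (HD : 0 <= D).
Hypotheses (HM0 : M 0%nat = 0) (HQ0 : Q 0%nat = 0) (HM1 : M (S n) = 1).
Hypothesis Hinc : forall j, (j <= n)%nat ->
  0 <= Q (S j) - Q j <= M (S j) - M j /\ M (S j) - M j <= D.
Hypothesis Hcon : forall j, (j < n)%nat ->
  (1 - M (S (S j))) * (Q (S j) - Q j) <= a * (M (S j) - M j).

Lemma capped_sums_bounds k : (k <= S n)%nat -> 0 <= M k /\ Q k <= M k.
Proof.
  induction k as [|k IH]; intros Hk; [rewrite HM0, HQ0; lra|].
  pose proof (Hinc k ltac:(lia)). destruct (IH ltac:(lia)). lra.
Qed.

Lemma capped_sums_step (Ha1 : a <= 1) j : (j <= n)%nat ->
  Q (S j) - Q j <= cap_prim a (M (S j) + 2 * D) - cap_prim a (M j + 2 * D).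
Proof.
  intros Hj. pose proof (Hinc j Hj) as Hj'. destruct (capped_sums_bounds j ltac:(lia)).
  (* [Hcon] caps the rate at [M (S (S j))], which exceeds [M j] by at most [2 D]. *)
  assert (Hrate : Q (S j) - Q j <= (M (S j) - M j) * cap_rate a (M j + 2 * D)).
  { destruct (Nat.eq_dec j n) as [->|Hjn].
    - rewrite cap_rate_eq1 by lra. lra.
    - pose proof (Hinc (S j) ltac:(lia)).
      pose proof (le_mul_cap_rate a _ _ _ Ha (proj1 Hj') (Hcon j ltac:(lia))).
      pose proof (cap_rate_mono a (M (S (S j))) (M j + 2 * D) Ha ltac:(lra)).
      nra. }
  pose proof (cap_prim_secant a (M j + 2 * D) (M (S j) + 2 * D) Ha Ha1 ltac:(lra) ltac:(lra)).
  lra.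
Qed.

Lemma capped_sums_bound : Q (S n) - a <= exp (-1) + 2 * D.
Proof.
  pose proof (exp_pos (-1)). destruct (capped_sums_bounds (S n) (le_n _)).
  destruct (Rle_dec a 1) as [Ha1|Ha1]; [|lra].
  assert (Htel : forall k, (k <= S n)%nat -> Q k <= cap_prim a (M k + 2 * D) - cap_prim a (2 * D)).
  { induction k as [|k IH]; intros Hk; [rewrite HQ0, HM0, Rplus_0_l; lra|].
    pose proof (capped_sums_step Ha1 k ltac:(lia)). specialize (IH ltac:(lia)). lra. }
  specialize (Htel (S n) (le_n _)).
  rewrite HM1, cap_prim_right in Htel by lra.
  pose proof (cap_prim_mono a 0 (2 * D) Ha Ha1 ltac:(lra) ltac:(lra)) as Hprim.
  rewrite cap_prim0 in Hprim by lra. pose proof (neg_mul_ln_le_exp_m1 a Ha). lra.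
Qed.

End CappedSums.

(** * Ramps and slices of a value density *)

(* A continuous stand-in for the indicator of [s <= i/n]: it is 1 for [n s <= i - 1] and 0
   for [n s >= i]. *)
Definition ramp (n i : nat) (s : R) : R := clamp 0 1 (INR i - INR n * s).

Definition slice (n j : nat) (s : R) : R := ramp n (S j) s - ramp n j s.

Lemma ramp_in n i s : 0 <= ramp n i s <= 1.
Proof. apply clamp_in; lra. Qed.

Lemma ramp_eq0 n i s : INR i <= INR n * s -> ramp n i s = 0.
Proof. intros. apply clamp_left; lra. Qed.

Lemma ramp_eq1 n i s : INR n * s <= INR i - 1 -> ramp n i s = 1.
Proof. intros. apply clamp_right; lra. Qed.

Lemma ramp0 n s : 0 <= s -> ramp n 0 s = 0.
Proof. intros. apply ramp_eq0. pose proof (pos_INR n). simpl. nra. Qed.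

Lemma ramp_last n s : s <= 1 -> ramp n (S n) s = 1.
Proof. intros. apply ramp_eq1. rewrite S_INR. pose proof (pos_INR n). nra. Qed.

Lemma lipschitz_ramp n i : lipschitz_on_Icc 0 1 (ramp n i).
Proof.
  exists (INR n). split; [apply pos_INR|]. intros s t _ _.
  eapply Rle_trans; [apply clamp_lip|].
  replace (INR i - INR n * s - (INR i - INR n * t)) with (- (INR n * (s - t))) by ring.
  rewrite Rabs_Ropp, Rabs_mult, (Rabs_pos_eq (INR n)) by apply pos_INR. lra.
Qed.

Lemma clamp_continuous_ramp n i : clamp_continuous 0 1 (ramp n i).
Proof.
  apply clamp_continuous_of_Icc; [lra|]. apply lipschitz_on_Icc_continuous, lipschitz_ramp.
Qed.

Lemma slice_in n j s : 0 <= slice n j s <= 1.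
Proof.
  unfold slice, ramp. pose proof (clamp_in 0 1 (INR (S j) - INR n * s) ltac:(lra)).
  pose proof (clamp_in 0 1 (INR j - INR n * s) ltac:(lra)).
  pose proof (clamp_mono 0 1 (INR j - INR n * s) (INR (S j) - INR n * s) ltac:(rewrite S_INR; lra)).
  pose proof (clamp_lip 0 1 (INR (S j) - INR n * s) (INR j - INR n * s)).
  rewrite S_INR in *. replace (INR j + 1 - INR n * s - (INR j - INR n * s)) with 1 in * by ring.
  rewrite Rabs_R1, Rabs_pos_eq in * by lra. lra.
Qed.

Lemma slice_eq0_right n j s : INR (S j) <= INR n * s -> slice n j s = 0.
Proof. intros. unfold slice. rewrite !ramp_eq0; rewrite ?S_INR in *; lra. Qed.

Lemma slice_eq0_left n j s : INR n * s <= INR j - 1 -> slice n j s = 0.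
Proof. intros. unfold slice. rewrite !ramp_eq1; rewrite ?S_INR; lra. Qed.

Lemma lipschitz_slice n j : lipschitz_on_Icc 0 1 (slice n j).
Proof. apply lipschitz_on_Icc_minus; apply lipschitz_ramp. Qed.

Lemma clamp_continuous_slice n j : clamp_continuous 0 1 (slice n j).
Proof. apply clamp_continuous_minus; apply clamp_continuous_ramp. Qed.

#[local] Hint Resolve clamp_continuous_ramp clamp_continuous_slice : clamp_continuous.

Lemma slice_end_in n j : (S j <= n)%nat -> 0 <= INR (S j) / INR n <= 1.
Proof.
  intros Hj. assert (Hn : 0 < INR n) by (apply lt_0_INR; lia).
  assert (INR (S j) <= INR n) by (apply le_INR; exact Hj).
  split; [apply Rdiv_le_0_compat; [apply pos_INR | exact Hn] | apply Rle_div_l; lra].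
Qed.

Definition mass_until (g : R -> R) (n i : nat) : R := RInt (fun s => g s * ramp n i s) 0 1.

Section MassUntil.
Variables (g : R -> R) (n : nat).
Hypothesis Cg : clamp_continuous 0 1 g.

Lemma mass_until0 : mass_until g n 0 = 0.
Proof. apply RInt_eq_0; [lra|]. intros s Hs. rewrite ramp0 by lra. ring. Qed.

Lemma mass_until_last : mass_until g n (S n) = RInt g 0 1.
Proof.
  apply RInt_ext_le; [lra|]. intros s Hs. rewrite ramp_last by lra. ring.
Qed.

Lemma mass_until_S j :
  mass_until g n (S j) - mass_until g n j = RInt (fun s => g s * slice n j s) 0 1.
Proof.
  unfold mass_until. rewrite <- RInt_Rminus by integrable.
  apply RInt_ext_le; [lra|]. intros. unfold slice. ring.
Qed.

Lemma mass_until_S_early j : (S j <= n)%nat ->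
  mass_until g n (S j) - mass_until g n j
  = RInt (fun s => g s * slice n j s) 0 (INR (S j) / INR n).
Proof.
  intros Hj. pose proof (slice_end_in n j Hj). assert (Hn : 0 < INR n) by (apply lt_0_INR; lia).
  rewrite mass_until_S, <- (RInt_Chasles_R _ 0 (INR (S j) / INR n) 1) by integrable.
  rewrite (RInt_eq_0 _ (INR (S j) / INR n) 1); [apply Rplus_0_r | lra |].
  intros s Hs. rewrite slice_eq0_right; [ring|].
  rewrite Rmult_comm. apply Rlt_le, Rlt_div_l; [exact Hn | apply Hs].
Qed.

Lemma mass_until_le i : (forall s, 0 <= s <= 1 -> 0 <= g s) -> mass_until g n i <= RInt g 0 1.
Proof.
  intros Hg. apply RInt_le; [lra | integrable | integrable |].
  intros s Hs. pose proof (ramp_in n i s). pose proof (Hg s ltac:(lra)). nra.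
Qed.

Lemma slice_mass_le B j : (1 <= n)%nat -> (forall s, 0 <= s <= 1 -> 0 <= g s <= B) ->
  mass_until g n (S j) - mass_until g n j <= 2 * B / INR n.
Proof.
  intros Hn Hg. assert (Hnpos : 1 <= INR n) by (apply (le_INR 1); exact Hn).
  assert (HB : 0 <= B) by (pose proof (Hg 0 ltac:(lra)); lra).
  rewrite mass_until_S.
  replace (2 * B / INR n) with (B * ((INR j + 1) / INR n - (INR j - 1) / INR n)) by (field; lra).
  apply RInt_le_support; [lra | | exact HB | integrable | |].
  - apply Rmult_le_compat_r; [apply Rlt_le, Rinv_0_lt_compat|]; lra.
  - intros s Hs. pose proof (slice_in n j s). pose proof (Hg s ltac:(lra)). nra.
  - intros s Hs [Hlt | Hgt].
    + rewrite slice_eq0_left; [ring|].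
      apply Rlt_le. rewrite Rmult_comm. apply Rlt_div_r in Hlt; lra.
    + rewrite slice_eq0_right; [ring|].
      rewrite S_INR. apply Rlt_le. rewrite Rmult_comm. apply Rlt_div_l in Hgt; lra.
Qed.

End MassUntil.

Lemma slice_mass_mono g h n j :
  clamp_continuous 0 1 g -> clamp_continuous 0 1 h ->
  (forall s, 0 <= s <= 1 -> 0 <= h s <= g s) ->
  0 <= mass_until h n (S j) - mass_until h n j <= mass_until g n (S j) - mass_until g n j.
Proof.
  intros Cg Ch Hhg. rewrite !mass_until_S by assumption. split.
  - apply RInt_ge_0; [lra | integrable |].
    intros s Hs. pose proof (slice_in n j s). pose proof (Hhg s ltac:(lra)). nra.
  - apply RInt_le; [lra | integrable | integrable |].
    intros s Hs. pose proof (slice_in n j s). pose proof (Hhg s ltac:(lra)). nra.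
Qed.

Lemma buyer_type_const V : 0 <= V -> buyer_type V (fun _ => V).
Proof.
  intros HV. split; [|split].
  - exists 0. split; [lra|]. intros.
    rewrite Rminus_diag, Rabs_R0. pose proof (Rabs_pos (s - t)). lra.
  - intros; exact HV.
  - rewrite RInt_Rconst. lra.
Qed.

Lemma buyer_type_bounded V w : buyer_type V w -> exists B, forall s, 0 <= s <= 1 -> 0 <= w s <= B.
Proof.
  intros [Hlip [Hpos _]]. destruct (lipschitz_on_Icc_bounded 0 1 w Hlip) as [B [_ HB]].
  exists B. intros s Hs. pose proof (HB s Hs). pose proof (Hpos s Hs).
  rewrite Rabs_pos_eq in * by exact (Hpos s Hs). lra.
Qed.

Lemma clamp_continuous_type V v : buyer_type V v -> clamp_continuous 0 1 v.
Proof.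
  intros [Hlip _]. apply clamp_continuous_of_Icc; [lra|]. apply lipschitz_on_Icc_continuous, Hlip.
Qed.

(* The type that follows [w], with slice [j] of its value scaled up by [1 + lam], until
   [(j+1)/n] and then fades out by [(j+2)/n]. *)
Definition deviant (w : R -> R) (n j : nat) (lam : R) (s : R) : R :=
  w s * (ramp n (S (S j)) s + lam * slice n j s).

Lemma deviant_early w n j lam s : INR n * s <= INR (S j) ->
  deviant w n j lam s = w s + lam * (w s * slice n j s).
Proof. intros. unfold deviant. rewrite ramp_eq1 by (rewrite (S_INR (S j)); lra). ring. Qed.

Lemma buyer_type_deviant w n j lam : buyer_type 1 w -> 0 <= lam ->
  mass_until w n (S (S j)) + lam * (mass_until w n (S j) - mass_until w n j) = 1 ->
  buyer_type 1 (deviant w n j lam).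
Proof.
  intros Hw Hlam Hmass. pose proof (clamp_continuous_type 1 w Hw) as Cw.
  destruct Hw as [Hlip [Hpos _]]. split; [|split].
  - apply lipschitz_on_Icc_mult; [exact Hlip|].
    apply lipschitz_on_Icc_plus; [apply lipschitz_ramp|].
    apply lipschitz_on_Icc_scal, lipschitz_slice.
  - intros t Ht. unfold deviant. pose proof (ramp_in n (S (S j)) t). pose proof (slice_in n j t).
    pose proof (Hpos t Ht). apply Rmult_le_pos; nra.
  - transitivity (RInt (fun s => w s * ramp n (S (S j)) s + lam * (w s * slice n j s)) 0 1).
    { apply RInt_ext_le; [lra|]. intros. unfold deviant. ring. }
    rewrite RInt_Rplus, RInt_Rmult_l, <- (mass_until_S w n Cw j) by integrable. exact Hmass.
Qed.

(** * Truthful mechanisms *)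

Section TruthfulMechanism.
Variables r x : mechanism.
Hypothesis Hwf : well_formed 1 r x.
Hypothesis Htr : truthful 1 r x.

Definition utility (v : R -> R) : R := RInt (util r x v v) 0 1.

Definition consumption (v : R -> R) (s : R) : R := r v s * v s.

Section BuyerType.
Variable v : R -> R.
Hypothesis Hv : buyer_type 1 v.

Lemma rate_in s : 0 <= s <= 1 -> 0 <= r v s <= 1.
Proof. apply (Hwf v Hv). Qed.

Lemma payment_ge0 s : 0 <= s <= 1 -> 0 <= x v s.
Proof. apply (Hwf v Hv). Qed.

Lemma clamp_continuous_rate : clamp_continuous 0 1 (r v).
Proof. apply clamp_continuous_of_Icc; [lra | apply (Hwf v Hv)]. Qed.

Lemma clamp_continuous_payment : clamp_continuous 0 1 (x v).
Proof. apply clamp_continuous_of_Icc; [lra | apply (Hwf v Hv)]. Qed.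

Lemma clamp_continuous_consumption : clamp_continuous 0 1 (consumption v).
Proof.
  apply clamp_continuous_mult; [apply clamp_continuous_rate | exact (clamp_continuous_type 1 v Hv)].
Qed.

Lemma consumption_in s : 0 <= s <= 1 -> 0 <= consumption v s <= v s.
Proof.
  intros Hs. unfold consumption. pose proof (rate_in s Hs). pose proof (proj1 (proj2 Hv) s Hs). nra.
Qed.

Lemma utility_eq : utility v = RInt (consumption v) 0 1 - revenue x v.
Proof.
  pose proof clamp_continuous_consumption. pose proof clamp_continuous_payment.
  apply RInt_Rminus; integrable.
Qed.

Lemma utility_in : 0 <= utility v <= 1.
Proof.
  pose proof clamp_continuous_consumption. pose proof clamp_continuous_payment.
  pose proof (clamp_continuous_type 1 v Hv).
  split.
  - apply RInt_ge_0; [lra | unfold util; integrable |].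
    intros s Hs. apply (proj1 Htr v Hv). lra.
  - rewrite utility_eq. pose proof (proj2 (proj2 Hv)).
    assert (RInt (consumption v) 0 1 <= RInt v 0 1).
    { apply RInt_le; [lra | integrable | integrable |].
      intros s Hs. apply consumption_in. lra. }
    assert (0 <= revenue x v).
    { apply RInt_ge_0; [lra | integrable |]. intros s Hs. apply payment_ge0. lra. }
    lra.
Qed.

End BuyerType.

#[local] Hint Resolve clamp_continuous_type clamp_continuous_rate clamp_continuous_payment
  clamp_continuous_consumption : clamp_continuous.

(* Truthfulness (ii): a type [v] that agrees with [w] plus extra value [lam * g] up to [tau]
   can report [w] and leave at [tau], earning at least the extra value that [w] is served. *)
Lemma deviation_gain w v g lam tau : buyer_type 1 w -> buyer_type 1 v ->
  0 <= lam -> 0 <= tau <= 1 ->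
  clamp_continuous 0 1 g -> (forall s, 0 <= s <= 1 -> 0 <= g s) ->
  (forall s, 0 <= s <= tau -> v s = w s + lam * g s) ->
  lam * RInt (fun s => r w s * g s) 0 tau <= utility v.
Proof.
  intros Hw Hv Hlam Htau Cg Hg Hvw.
  assert (Hshift : forall s, 0 <= s <= tau ->
    util r x v w s = util r x w w s + lam * (r w s * g s)).
  { intros s Hs. unfold util. rewrite Hvw by exact Hs. ring. }
  assert (Hgain : forall s, 0 <= s <= tau -> 0 <= lam * (r w s * g s)).
  { intros s Hs. pose proof (rate_in w Hw s ltac:(lra)). pose proof (Hg s ltac:(lra)).
    apply Rmult_le_pos; [exact Hlam | nra]. }
  assert (Hir : forall s, 0 <= s <= tau -> 0 <= util r x w w s).
  { intros s Hs. apply (proj1 Htr w Hw). lra. }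
  assert (Hdev : RInt (util r x v w) 0 tau <= utility v).
  { apply (proj2 Htr v w tau Hv Hw Htau). intros s Hs.
    rewrite Hshift by exact Hs. pose proof (Hir s Hs). pose proof (Hgain s Hs). lra. }
  assert (Hsplit : RInt (util r x v w) 0 tau =
    RInt (util r x w w) 0 tau + lam * RInt (fun s => r w s * g s) 0 tau).
  { rewrite <- RInt_Rmult_l, <- RInt_Rplus by (unfold util; integrable).
    apply RInt_ext_le; [lra|]. intros s Hs. apply Hshift. lra. }
  assert (0 <= RInt (util r x w w) 0 tau).
  { apply RInt_ge_0; [lra | unfold util; integrable |]. intros s Hs. apply Hir. lra. }
  lra.
Qed.

Lemma slice_incentive w astar n j : buyer_type 1 w ->
  (forall v, buyer_type 1 v -> utility v <= astar) -> (j < n)%nat ->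
  (1 - mass_until w n (S (S j))) *
    (mass_until (consumption w) n (S j) - mass_until (consumption w) n j)
  <= astar * (mass_until w n (S j) - mass_until w n j).
Proof.
  intros Hw Hsup Hj. pose proof (clamp_continuous_type 1 w Hw) as Cw.
  destruct (slice_mass_mono w (consumption w) n j Cw (clamp_continuous_consumption w Hw)
    (consumption_in w Hw)) as [Hq0 Hqm].
  pose proof (mass_until_le w n Cw (S (S j)) (proj1 (proj2 Hw))) as HM2.
  rewrite (proj2 (proj2 Hw)) in HM2.
  set (m := mass_until w n (S j) - mass_until w n j) in *.
  set (q := mass_until (consumption w) n (S j) - mass_until (consumption w) n j) in *.
  set (M2 := mass_until w n (S (S j))) in *.
  destruct (Req_dec m 0) as [Hm0 | Hm0].
  { replace q with 0 by lra. rewrite Hm0. lra. }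
  set (lam := (1 - M2) / m).
  assert (Hlam : 0 <= lam) by (apply Rmult_le_pos; [lra | apply Rlt_le, Rinv_0_lt_compat; lra]).
  assert (Hlam_m : 1 - M2 = lam * m) by (unfold lam; field; lra).
  assert (Hv : buyer_type 1 (deviant w n j lam))
    by (apply buyer_type_deviant; [exact Hw | exact Hlam | fold m M2; lra]).
  assert (Hn : 0 < INR n) by (apply lt_0_INR; lia).
  set (tau := INR (S j) / INR n).
  assert (Htau : 0 <= tau <= 1) by exact (slice_end_in n j Hj).
  assert (Hgain : lam * RInt (fun s => r w s * (w s * slice n j s)) 0 tau
                  <= utility (deviant w n j lam)).
  { apply deviation_gain; auto with clamp_continuous.
    - intros s Hs. pose proof (slice_in n j s). pose proof (proj1 (proj2 Hw) s Hs). nra.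
    - intros s Hs. apply deviant_early.
      rewrite Rmult_comm. apply Rle_div_r; [exact Hn | apply Hs]. }
  assert (Hserved : RInt (fun s => r w s * (w s * slice n j s)) 0 tau = q).
  { unfold q. rewrite (mass_until_S_early _ n (clamp_continuous_consumption w Hw) j Hj).
    apply RInt_ext_le; [apply Htau|]. intros. unfold consumption. ring. }
  pose proof (Hsup _ Hv). rewrite Hserved in Hgain. rewrite Hlam_m. nra.
Qed.

Lemma ex_nat_div_le c e : 0 < e -> exists n, (1 <= n)%nat /\ c / INR n <= e.
Proof.
  intros He. destruct (INR_unbounded (Rabs c / e)) as [n Hn].
  exists (S n). split; [lia|]. rewrite S_INR. pose proof (pos_INR n).
  apply Rlt_div_l in Hn; [|exact He]. pose proof (Rle_abs c).
  apply Rle_div_l; nra.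
Qed.

Lemma revenue_le_of_utility_bound w astar e : buyer_type 1 w ->
  (forall v, buyer_type 1 v -> utility v <= astar) -> 0 < e ->
  revenue x w <= exp (-1) + (astar - utility w) + e.
Proof.
  intros Hw Hsup He. pose proof (clamp_continuous_type 1 w Hw) as Cw.
  destruct (buyer_type_bounded 1 w Hw) as [B HB].
  destruct (ex_nat_div_le (2 * B) (e / 4)) as [n [Hn HnB]]; [lra|].
  assert (HD : 0 <= 2 * B / INR n).
  { pose proof (HB 0 ltac:(lra)). apply Rdiv_le_0_compat; [lra | apply lt_0_INR; lia]. }
  pose proof (utility_in w Hw). pose proof (Hsup w Hw).
  assert (Hcap : mass_until (consumption w) n (S n) - (astar + e / 2)
                 <= exp (-1) + 2 * (2 * B / INR n)).
  { apply (capped_sums_bound n (mass_until w n)); try lra.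
    - apply mass_until0.
    - apply mass_until0.
    - rewrite mass_until_last. exact (proj2 (proj2 Hw)).
    - intros k Hk. split.
      + apply slice_mass_mono; auto with clamp_continuous. apply consumption_in, Hw.
      + apply slice_mass_le; assumption.
    - intros k Hk. eapply Rle_trans; [apply slice_incentive; eassumption|].
      apply Rmult_le_compat_r; [|lra].
      destruct (slice_mass_mono w (consumption w) n k Cw (clamp_continuous_consumption w Hw)
        (consumption_in w Hw)). lra. }
  rewrite mass_until_last in Hcap. rewrite utility_eq by exact Hw. lra.
Qed.

End TruthfulMechanism.

Lemma ex_sup_approx {T : Type} (P : T -> Prop) (f : T -> R) (B : R) (t0 : T) :
  P t0 -> (forall t, P t -> f t <= B) ->
  exists s, (forall t, P t -> f t <= s) /\ (forall e, 0 < e -> exists t, P t /\ s - e < f t).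
Proof.
  intros Ht0 HB.
  destruct (completeness (fun y => exists t, P t /\ y = f t)) as [s [Hub Hlub]].
  - exists B. intros y [t [Ht ->]]. auto.
  - exists (f t0). eauto.
  - exists s. split.
    + intros t Ht. apply Hub. eauto.
    + intros e He. apply NNPP. intros Hnone.
      assert (s <= s - e); [|lra].
      apply Hlub. intros y [t [Ht ->]]. apply Rnot_lt_le. intros Hlt. apply Hnone. eauto.
Qed.

Lemma Glb_Rbar_le_approx (E : R -> Prop) (c : R) :
  (forall e, 0 < e -> exists y, E y /\ y <= c + e) -> Rbar_le (Glb_Rbar E) c.
Proof.
  intros Happrox. destruct (Glb_Rbar_correct E) as [Hlb _].
  revert Hlb. generalize (Glb_Rbar E). intros [g | | ] Hlb; simpl; auto.
  - apply Rnot_lt_le. intros Hlt.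
    destruct (Happrox ((g - c) / 2)) as [y [Hy Hyc]]; [lra|].
    specialize (Hlb y Hy). simpl in Hlb. lra.
  - destruct (Happrox 1 Rlt_0_1) as [y [Hy _]]. exact (Hlb y Hy).
Qed.

Theorem theorem8 (r x : mechanism) :
  well_formed 1 r x -> truthful 1 r x ->
  Rbar_le (inf_revenue 1 x) (Finite (exp (-1))).
Proof.
  intros Hwf Htr.
  destruct (ex_sup_approx (buyer_type 1) (utility r x) 1 (fun _ => 1)) as [astar [Hsup Happrox]].
  - apply buyer_type_const. lra.
  - intros v Hv. apply (utility_in r x Hwf Htr v Hv).
  - apply Glb_Rbar_le_approx. intros e He.
    destruct (Happrox (e / 2) ltac:(lra)) as [w [Hw Hclose]].
    exists (revenue x w). split; [exists w; auto|].
    pose proof (revenue_le_of_utility_bound r x Hwf Htr w astar (e / 2) Hw Hsup ltac:(lra)).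
    lra.
Qed.
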